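(* (i) For every integer $d\geq 2$ there exist a partition $\mathcal{P}$ of $\mathbb{R}^{d}$ and $M\in(0,\infty)$ such that every $X\in\mathcal{P}$ is Lebesgue measurable with $m(X)<M$, together with a function $\epsilon:\mathbb{R}^{d}\to(0,\infty)$ such that $|\mathcal{N}_{\epsilon(\vec{p})}(\vec{p})|\leq d$ for all $\vec{p}\in\mathbb{R}^{d}$. (ii) For $d=1$: if $\mathcal{P}$ is a partition of $\mathbb{R}$ and $M\in(0,\infty)$ is such that every $X\in\mathcal{P}$ is Lebesgue measurable with $m(X)<M$, then for every function $\epsilon:\mathbb{R}\to(0,\infty)$ there exists $p\in\mathbb{R}$ with $|\mathcal{N}_{\epsilon(p)}(p)|\geq 2$.
   Context: $m$ is Lebesgue measure. On $\mathbb{R}^d$ use $d_{max}(\vec{x},\vec{y})=\max_i|x_i-y_i|$, $\overline{B}_{r}(\vec{p})=\{\vec{x}:d_{max}(\vec{x},\vec{p})\le r\}$ and $\mathcal{N}_{r}(\vec{p})=\{X\in\mathcal{P}: X\cap\overline{B}_{r}(\vec{p})\neq\emptyset\}$. *)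

From HB Require Import structures.
From mathcomp Require Import all_boot all_order all_algebra.
From mathcomp Require Import all_classical all_reals all_analysis.
Set Implicit Arguments. Unset Strict Implicit. Unset Printing Implicit Defensive.
Import Order.TTheory GRing.Theory Num.Theory.
Import numFieldNormedType.Exports.
Local Open Scope classical_set_scope.
Local Open Scope ring_scope.

Section Defs.
Variables (R : realType) (d : nat).
Notation V := 'rV[R]_d.

Definition dmax (x y : V) : R := \big[Num.max/0]_(i < d) `|x ord0 i - y ord0 i|.

Definition cball_max (r : R) (p : V) : set V := [set x | dmax x p <= r].

Definition box (a b : V) : set V := [set x | forall i, a ord0 i <= x ord0 i < b ord0 i].
Definition box_vol (a b : V) : R := \prod_(i < d) Num.max 0 (b ord0 i - a ord0 i).

Definition lebesgue_outer (A : set V) : \bar R :=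
  ereal_inf [set (\sum_(0 <= k <oo) (box_vol (ab.1 k) (ab.2 k))%:E)%E
            | ab in [set ab : (nat -> V) * (nat -> V) |
                     A `<=` \bigcup_k box (ab.1 k) (ab.2 k)]].

(* Lebesgue measurable = Caratheodory measurable for the Lebesgue outer measure;
   on such sets the Lebesgue measure m is the outer measure. *)
Definition lebesgue_measurable (A : set V) : Prop :=
  caratheodory_measurable lebesgue_outer A.
Definition m (A : set V) : \bar R := lebesgue_outer A.

End Defs.

Definition is_partition (T : Type) (P : set (set T)) : Prop :=
  [/\ forall X, P X -> X !=set0,
      forall X Y, P X -> P Y -> X `&` Y !=set0 -> X = Y
    & forall x, exists X, P X /\ X x].

Definition neighbours (R : realType) (d : nat) (P : set (set 'rV[R]_d)) (r : R)
  (p : 'rV[R]_d) : set (set 'rV[R]_d) :=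
  [set X | P X /\ X `&` cball_max r p !=set0].

From HB Require Import structures.
From mathcomp Require Import all_boot all_order all_algebra.
From mathcomp Require Import all_classical all_reals all_analysis.
From mathcomp Require Import ring lra zify.
Set Implicit Arguments. Unset Strict Implicit. Unset Printing Implicit Defensive.
Import Order.TTheory GRing.Theory Num.Theory.
Import numFieldNormedType.Exports.
Local Open Scope classical_set_scope.
Local Open Scope ring_scope.

(* (i) The sup-norm shells  S_k = {x | k <= |x|^d < k+1}  partition R^d.
   S_k lies between the cubes of volumes 2^d k and 2^d (k+1), and covering it by 2d
   slabs bounds its measure by d 2^(d+1).  As x |-> |x|^d is continuous, a small
   closed ball around p only meets shells whose index is within 1/2 of |p|^d, so at
   most 2 <= d of them.  Measurability comes from the coordinate half-spaces, which
   split every box cover of a set into two box covers of the same total volume.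
   (ii) If on the line every point had a ball meeting a single block, all blocks
   would be open; by connectedness the only block would be the whole line, whose
   measure is infinite. *)

Lemma nneseries_pair_reindex (R : realType) (a : nat -> nat -> \bar R) (f : nat -> nat * nat) :
  bijective f -> (forall i j, (0 <= a i j)%E) ->
  (\sum_(k <oo) a (f k).1 (f k).2 = \sum_(i <oo) \sum_(j <oo) a i j)%E.
Proof.
move=> f_bij a0.
transitivity (\esum_(ij in [set: nat] `*` [set: nat]) a ij.1 ij.2)%E.
  rewrite nneseries_esumT // (reindex_esum [set: nat] _ f) //.
  by rewrite setXTT setTT_bijective.
rewrite (_ : _ `*` _ = [set: nat] `*`` (fun=> [set: nat])); last by apply/seteqP.
rewrite -(@esum_esum _ _ _ _ _ (fun i j => a i j)) // nneseries_esumT; last first.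
  by move=> i; exact: nneseries_ge0.
by apply: eq_esum => i _; rewrite nneseries_esumT.
Qed.

Section cover_outer.
Context {R : realType} {T I : Type} (piece : I -> set T) (cost : I -> R).
Hypothesis cost_ge0 : forall i, 0 <= cost i.
Local Open Scope ereal_scope.

Definition cover_outer (A : set T) : \bar R :=
  ereal_inf [set \sum_(k <oo) (cost (c k))%:E
            | c in [set c : nat -> I | A `<=` \bigcup_k piece (c k)]].

Lemma cover_outer_le A (c : nat -> I) : A `<=` \bigcup_k piece (c k) ->
  cover_outer A <= \sum_(k <oo) (cost (c k))%:E.
Proof. by move=> Ac; apply: ereal_inf_lbound; exists c. Qed.

Lemma cover_outer_ge0 A : 0 <= cover_outer A.
Proof.
by apply: le_ereal_inf_tmp => _ [c _ <-]; apply: nneseries_ge0 => k _ _; rewrite lee_fin.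
Qed.

Lemma cover_outer0 : (exists null, cost null = 0%R) -> cover_outer set0 = 0.
Proof.
move=> [null null0]; apply/le_anti; rewrite cover_outer_ge0 andbT.
by rewrite (le_trans (@cover_outer_le _ (fun=> null) (sub0set _))) // eseries0 // null0.
Qed.

Lemma cover_outer_piece i : (exists null, cost null = 0%R) ->
  cover_outer (piece i) <= (cost i)%:E.
Proof.
move=> [null null0]; pose c k := if k is 0 then i else null.
have /cover_outer_le : piece i `<=` \bigcup_k piece (c k) by move=> t it; exists 0%N.
rewrite nneseries_recl //; last by move=> k _; rewrite lee_fin.
by rewrite [X in _ + X]eseries0 ?adde0 // => -[|k] //= _ _; rewrite null0.
Qed.

Lemma cover_outer_adherent A (e : R) : (0 < e)%R -> cover_outer A < +oo ->
  exists2 c : nat -> I, A `<=` \bigcup_k piece (c k) &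
    \sum_(k <oo) (cost (c k))%:E <= cover_outer A + e%:E.
Proof.
move=> e0 Afin; have /(lb_ereal_inf_adherent e0) : cover_outer A \is a fin_num.
  by rewrite ge0_fin_numE // cover_outer_ge0.
by move=> [_ [c Ac <-] cA]; exists c => //; exact: ltW.
Qed.

Lemma cover_outer_sigma_subadditive A (F : nat -> set T) :
  subset_sigma_subadditive cover_outer A F.
Proof.
move=> AF; have [[i Fioo]|] := pselect (exists i, cover_outer (F i) = +oo).
  rewrite (eseries_pinfty _ _ Fioo) ?leey // => k _.
  by rewrite gt_eqF // (lt_le_trans _ (cover_outer_ge0 _)).
move=> /forallNP Ffin.
apply/lee_addgt0Pr => e e0.
rewrite (le_trans _ (epsilon_trick _ _ _)) //; last 2 first.
- by move=> i; exact: cover_outer_ge0.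
- exact: ltW.
(* Cover each F i up to e / 2^(i+1) and merge the covers along a bijection
   nat -> nat * nat. *)
have /choice[c cF] : forall i, exists c : nat -> I,
    F i `<=` \bigcup_k piece (c k) /\
    \sum_(k <oo) (cost (c k))%:E <= cover_outer (F i) + (e / (2 ^ i.+1)%:R)%:E.
  move=> i; have ei0 : (0 < e / (2 ^ i.+1)%:R)%R by rewrite divr_gt0.
  have Fi_fin : cover_outer (F i) < +oo by rewrite ltey; exact/eqP/Ffin.
  by have [c] := cover_outer_adherent ei0 Fi_fin; exists c.
have /card_esym/ppcard_eqP[f] := card_nat2.
have f_bij : bijective f by rewrite -setTT_bijective.
apply: le_trans (@cover_outer_le _ (fun k => c (f k).1 (f k).2) _) _.
  move=> t /AF [i _ /(cF i).1 [j _ cijt]]; exists (f^-1%FUN (i, j)) => //=.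
  by rewrite invK ?inE.
rewrite (@nneseries_pair_reindex _ (fun i j => (cost (c i j))%:E) _ f_bij); last first.
  by move=> i j; rewrite lee_fin.
apply: lee_nneseries => i _; last exact: (cF i).2.
by move=> _; apply: nneseries_ge0 => j _ _; rewrite lee_fin.
Qed.

End cover_outer.

Lemma interval_length_split (R : realType) (a b c : R) :
  Num.max 0 (Num.min b c - a) + Num.max 0 (b - Num.max a c) = Num.max 0 (b - a).
Proof.
have [bc|cb] := leP b c; have [ac|ca] := leP a c;
  rewrite ?subrr; repeat case: (leP 0 _) => ?; lra.
Qed.

Section lebesgue_outer.
Variables (R : realType) (n : nat).
Local Notation V := 'rV[R]_n.+1.
Local Notation mu := (@lebesgue_outer R n.+1).

Lemma box_vol_ge0 (a b : V) : 0 <= box_vol a b.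
Proof. by apply: prodr_ge0 => i _; rewrite le_max lexx. Qed.

Lemma box_volxx (a : V) : box_vol a a = 0.
Proof. by rewrite /box_vol big_ord_recl subrr maxxx mul0r. Qed.

Lemma lebesgue_outerE :
  mu = cover_outer (fun ab : V * V => box ab.1 ab.2) (fun ab => box_vol ab.1 ab.2).
Proof.
apply/funext => A; congr ereal_inf; apply/seteqP; split => _ [ab Aab <-].
  by exists (fun k => (ab.1 k, ab.2 k)).
by exists (fun k => (ab k).1, fun k => (ab k).2).
Qed.

Local Open Scope ereal_scope.

Lemma lebesgue_outer_cover A (a b : nat -> V) : A `<=` \bigcup_k box (a k) (b k) ->
  mu A <= \sum_(k <oo) (box_vol (a k) (b k))%:E.
Proof. by move=> Aab; apply: ereal_inf_lbound; exists (a, b). Qed.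

Lemma lebesgue_outer_ge0 A : 0 <= mu A.
Proof. by rewrite lebesgue_outerE; apply: cover_outer_ge0 => -[]; exact: box_vol_ge0. Qed.

Lemma lebesgue_outer0 : mu set0 = 0.
Proof.
rewrite lebesgue_outerE; apply: cover_outer0; last by exists (0%R, 0%R); exact: box_volxx.
by move=> -[]; exact: box_vol_ge0.
Qed.

Lemma lebesgue_outer_sigma_subadditive A F : subset_sigma_subadditive mu A F.
Proof.
by rewrite lebesgue_outerE; apply: cover_outer_sigma_subadditive => -[]; exact: box_vol_ge0.
Qed.

HB.instance Definition _ := isSubsetOuterMeasure.Build R V mu
  lebesgue_outer0 lebesgue_outer_ge0 lebesgue_outer_sigma_subadditive.

Lemma lebesgue_outer_box (a b : V) : mu (box a b) <= (box_vol a b)%:E.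
Proof.
rewrite lebesgue_outerE; apply: (cover_outer_piece (fun ab : V * V => box ab.1 ab.2) _ (a, b)).
- by move=> -[]; exact: box_vol_ge0.
- by exists (0%R, 0%R); exact: box_volxx.
Qed.

Local Close Scope ereal_scope.

Definition set_coord (v : V) (j : 'I_n.+1) (t : R) : V :=
  \row_i (if i == j then t else v ord0 i).

Lemma box_vol_split (a b : V) j c :
  box_vol a (set_coord b j (Num.min (b ord0 j) c)) +
  box_vol (set_coord a j (Num.max (a ord0 j) c)) b = box_vol a b.
Proof.
have off_j (v : V) t i : i != j -> set_coord v j t ord0 i = v ord0 i.
  by move=> /negbTE ij; rewrite mxE ij.
rewrite /box_vol [X in X + _](bigD1 j) // [X in _ + X](bigD1 j) // [RHS](bigD1 j) //=.
rewrite [in X in X + _](eq_bigr (fun i => Num.max 0 (b ord0 i - a ord0 i))); last first.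
  by move=> i ij; rewrite off_j.
rewrite [in X in _ + X](eq_bigr (fun i => Num.max 0 (b ord0 i - a ord0 i))); last first.
  by move=> i ij; rewrite off_j.
by rewrite !mxE eqxx -mulrDl interval_length_split.
Qed.

Lemma halfspace_caratheodory j (c : R) : mu.-caratheodory [set x : V | x ord0 j < c].
Proof.
apply: le_caratheodory_measurable => X.
apply: le_ereal_inf_tmp => _ [[a b] /= cov <-].
have cov_lt : X `&` [set x : V | x ord0 j < c] `<=`
    \bigcup_k box (a k) (set_coord (b k) j (Num.min (b k ord0 j) c)).
  move=> x [/cov [k _ xk] xc]; exists k => // i; rewrite !mxE.
  by have := xk i; case: eqP => [->|] // /andP[-> xb]; rewrite lt_min xb.
have cov_ge : X `&` ~` [set x : V | x ord0 j < c] `<=`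
    \bigcup_k box (set_coord (a k) j (Num.max (a k ord0 j) c)) (b k).
  move=> x [/cov [k _ xk] /negP]; rewrite -leNgt => cx; exists k => // i; rewrite !mxE.
  by have := xk i; case: eqP => [->|] // /andP[ax ->]; rewrite ge_max ax cx.
apply: le_trans (leeD (lebesgue_outer_cover cov_lt) (lebesgue_outer_cover cov_ge)) _.
rewrite -nneseriesD; last 2 first.
- by move=> k _ _; rewrite lee_fin box_vol_ge0.
- by move=> k _ _; rewrite lee_fin box_vol_ge0.
by apply: lee_nneseries => k _; rewrite -?EFinD ?box_vol_split ?adde_ge0 ?lee_fin ?box_vol_ge0.
Qed.

End lebesgue_outer.

Lemma dmaxE (R : realType) d (x y : 'rV[R]_d) : dmax x y = `|x - y|.
Proof.
rewrite [RHS]/Num.norm /= mx_normrE /dmax; apply/le_anti/andP; split.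
  apply: bigmax_le => [|i _]; first by rewrite bigmax_idl le_max lexx.
  by rewrite (le_trans _ (le_bigmax _ _ (ord0, i))) //= !mxE.
apply: bigmax_le => [|[i j] _]; first by rewrite bigmax_idl le_max lexx.
by rewrite (ord1 i) (le_trans _ (le_bigmax _ _ j)) //= !mxE.
Qed.

Lemma measurable_fun_bigmaxr d (T : measurableType d) (R : realType) (I : Type)
    (s : seq I) (f : I -> T -> R) :
  (forall i, measurable_fun setT (f i)) ->
  measurable_fun setT (fun x => \big[Num.max/0]_(i <- s) f i x).
Proof.
move=> mf; elim: s => [|i s IH].
  by under eq_fun do rewrite big_nil; exact: measurable_cst.
by under eq_fun do rewrite big_cons; exact: measurable_realfun.measurable_maxr.
Qed.

Section caratheodory_measurable_functions.
Variables (R : realType) (n : nat).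
Local Notation mu := (@lebesgue_outer R n.+1).
Local Notation T := (caratheodory_type mu).

Lemma measurable_coord j : measurable_fun setT (fun x : T => x ord0 j).
Proof.
apply: (measurability _ (@measurable_realfun.RGenInftyO.measurableE R)).
move=> _ [_ [c ->] <-]; rewrite setTI.
have -> : (fun x : T => x ord0 j) @^-1` `]-oo, c[ = [set x : T | x ord0 j < c].
  by apply/seteqP; split => x /=; rewrite in_itv.
exact: halfspace_caratheodory.
Qed.

Lemma measurable_norm : measurable_fun setT (fun x : T => `|x : 'rV[R]_n.+1|).
Proof.
under eq_fun do rewrite -[x in `|x|]subr0 -dmaxE.
apply: measurable_fun_bigmaxr => i.
under eq_fun do rewrite mxE subr0.
exact: measurableT_comp (measurable_coord i).
Qed.

End caratheodory_measurable_functions.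

Lemma exprn_root (R : realType) n (x : R) : 0 <= x -> (x `^ n.+1%:R^-1) ^+ n.+1 = x.
Proof.
by move=> x0; rewrite -powR_mulrn ?powR_ge0 // -powRrM mulVf ?powRr1.
Qed.

Lemma subrXX_ge (R : realType) n (r s : R) : 0 <= r <= s ->
  (s - r) * s ^+ n <= s ^+ n.+1 - r ^+ n.+1.
Proof.
move=> /andP[r0 rs]; rewrite -subr_ge0 !exprS.
have -> : s * s ^+ n - r * r ^+ n - (s - r) * s ^+ n = r * (s ^+ n - r ^+ n) by ring.
by rewrite mulr_ge0 // subr_ge0 lerXn2r // nnegrE (le_trans r0).
Qed.

Lemma truncn_half_near (R : realType) (y z : R) k : 0 <= y -> `|z - y| < 2^-1 ->
  k%:R <= z < k.+1%:R -> ((Num.truncn (y + 2^-1)).-1 <= k <= Num.truncn (y + 2^-1))%N.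
Proof.
move=> y0; rewrite ltr_norml => /andP[zy1 zy2] /andP[kz zk].
have yh0 : 0 <= y + 2^-1 by rewrite addr_ge0.
have K_le : (Num.truncn (y + 2^-1))%:R <= y + 2^-1 by rewrite truncn_le.
apply/andP; split; last by rewrite truncn_ge_nat //; lra.
have : (Num.truncn (y + 2^-1))%:R < k.+2%:R :> R.
  by rewrite -[k.+2%:R]natr1 -natr1 in zk *; lra.
by rewrite ltr_nat; case: (Num.truncn _).
Qed.

Section shells.
Variables (R : realType) (n : nat).
Local Notation V := 'rV[R]_n.+1.
Local Notation mu := (@lebesgue_outer R n.+1).

Definition shell (k : nat) : set V := [set x | k%:R <= `|x| ^+ n.+1 < k.+1%:R].

Lemma shell_measurable k : lebesgue_measurable (shell k).
Proof.
have := measurable_realfun.measurable_funX n.+1 (@measurable_norm R n) measurableT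
  (measurable_itv `[k%:R, k.+1%:R[).
by rewrite setTI.
Qed.

Lemma shell_inj k k' (x : V) : shell k x -> shell k' x -> k = k'.
Proof.
move=> /andP[kx xk] /andP[k'x xk'].
have /(le_lt_trans kx) : `|x| ^+ n.+1 < k'.+1%:R := xk'.
have /(le_lt_trans k'x) : `|x| ^+ n.+1 < k.+1%:R := xk.
by rewrite !ltr_nat !ltnS => kk' k'k; apply/eqP; rewrite eqn_leq kk' k'k.
Qed.

Lemma shell_truncn (x : V) : shell (Num.truncn (`|x| ^+ n.+1)) x.
Proof. by apply: truncn_itv; rewrite exprn_ge0. Qed.

Definition slab (i : 'I_n.+1) (c w s : R) : set V :=
  box (\row_j (if j == i then c else - s)) (\row_j (if j == i then c + w else s)).

Lemma lebesgue_outer_slab i c w s : 0 <= w -> 0 <= s ->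
  (mu (slab i c w s) <= (w * (s *+ 2) ^+ n)%:E)%E.
Proof.
move=> w0 s0; apply: le_trans (lebesgue_outer_box _ _) _; rewrite lee_fin.
rewrite /box_vol (bigD1 i) //= !mxE eqxx addrAC subrr add0r max_r //.
rewrite (eq_bigr (fun=> s *+ 2)) => [|j /negbTE ji]; last first.
  by rewrite !mxE ji opprK max_r ?addr_ge0 // -mulr2n.
by rewrite prodr_const cardC1 card_ord.
Qed.

Lemma coord_le_norm (x : V) i : `|x ord0 i| <= `|x|.
Proof.
have -> : `|x| = dmax x 0 by rewrite dmaxE subr0.
by rewrite (le_trans _ (le_bigmax _ _ i)) // !mxE subr0.
Qed.

Lemma exists_coord_ge_norm (x : V) : exists i, `|x| <= `|x ord0 i|.
Proof.
have /bigmax_geP[x0|[i _ xi]] : `|x| <= dmax x 0 by rewrite dmaxE subr0.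
  by exists ord0; rewrite (le_trans x0).
by exists i; rewrite !mxE subr0 in xi.
Qed.

Lemma annulus_sub_slabs (x : V) r s : r <= `|x| < s ->
  exists i, (slab i r ((s - r) *+ 2) s `|` slab i (- s) ((s - r) *+ 2) s) x.
Proof.
move=> /andP[rx xs]; have [i xi] := exists_coord_ge_norm x; exists i.
have other j : j != i -> - s <= x ord0 j < s.
  move=> _; have := le_lt_trans (coord_le_norm x j) xs.
  by rewrite ltr_norml => /andP[/ltW -> ->].
have := le_lt_trans (coord_le_norm x i) xs; have := le_trans rx xi.
have [xi0|xi0] := leP 0 (x ord0 i).
  rewrite ger0_norm // => rxi xis; left => j; rewrite !mxE.
  by case: eqP => [->|/eqP]; [rewrite rxi; lra | exact: other].
rewrite ltr0_norm // => rxi xis; right => j; rewrite !mxE.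
by case: eqP => [->|/eqP]; [apply/andP; split; lra | exact: other].
Qed.

Lemma lebesgue_outer_annulus r s : 0 <= r <= s ->
  (mu [set x : V | (r <= `|x| < s)%R] <= ((s - r) * s ^+ n *+ (n.+1 * 2 ^ n.+2))%:E)%E.
Proof.
move=> /andP[r0 rs]; have s0 := le_trans r0 rs.
pose w := (s - r) *+ 2; have w0 : 0 <= w by rewrite mulrn_wge0 // subr_ge0.
pose F (j : nat) := slab (inord j) r w s `|` slab (inord j) (- s) w s.
have cover : [set x | r <= `|x| < s] `<=` \big[setU/set0]_(j < n.+1) F j.
  move=> x /annulus_sub_slabs[i xi]; rewrite -bigcup_mkord.
  by exists i => /=; [exact: ltn_ord | rewrite /F inord_val].
apply: le_trans (le_outer_measure _ _ _ cover) _.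
apply: le_trans (outer_measure_subadditive _ F n.+1) _.
have slabs j : (mu (F j) <= (w * (s *+ 2) ^+ n *+ 2)%:E)%E.
  apply: le_trans (outer_measureU2 _ _ _) _.
  by rewrite EFin_natmul mulr2n; apply: leeD; exact: lebesgue_outer_slab.
apply: le_trans; first by apply: lee_sum => j _; exact: slabs.
rewrite sumEFin lee_fin sumr_const card_ord le_eqVlt; apply/orP; left; apply/eqP.
by rewrite /w exprMn_n mulrnAl mulrnAr -!mulrnA; congr (_ *+ _); rewrite !expnS; lia.
Qed.

Lemma lebesgue_outer_shell k : (mu (shell k) <= (n.+1 * 2 ^ n.+2)%:R%:E)%E.
Proof.
pose r : R := k%:R `^ n.+1%:R^-1; pose s : R := k.+1%:R `^ n.+1%:R^-1.
have rk : r ^+ n.+1 = k%:R by exact: exprn_root.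
have sk : s ^+ n.+1 = k.+1%:R by exact: exprn_root.
have [r0 s0] : 0 <= r /\ 0 <= s by split; exact: powR_ge0.
have rs : r <= s by rewrite -(ler_pXn2r (ltn0Sn n)) ?nnegrE // rk sk ler_nat.
have shell_annulus : shell k `<=` [set x | r <= `|x| < s].
  move=> x /andP[kx xk]; apply/andP; split.
    by rewrite -(ler_pXn2r (ltn0Sn n)) ?nnegrE // rk.
  by rewrite -(ltr_pXn2r (ltn0Sn n)) ?nnegrE // sk.
apply: le_trans (le_outer_measure _ _ _ shell_annulus) _.
have r0s : 0 <= r <= s by rewrite r0 rs.
apply: le_trans (lebesgue_outer_annulus r0s) _.
have := subrXX_ge n r0s; rewrite sk rk -natr1 addrAC subrr add0r.
by rewrite lee_fin -mulr_natr; apply: ler_piMl.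
Qed.

Lemma exprn_norm_close (p : V) : exists e : R, 0 < e /\
  forall q, `|q - p| <= e -> `|(`|q| ^+ n.+1 - `|p| ^+ n.+1)| < 2^-1.
Proof.
have cont : {for p, continuous ((fun t : R => t ^+ n.+1) \o (fun x : V => `|x|))}.
  by apply: continuous_comp; [exact: norm_continuous | exact: exprn_continuous].
have half0 : 0 < 2^-1 :> R by rewrite invr_gt0.
move/cvgrPdist_lt: cont => /(_ _ half0)/nbhs_ballP[e e0 near_p].
exists (e / 2); split => [|q qp]; first by rewrite divr_gt0.
rewrite distrC; apply: near_p.
by rewrite -ball_normE /= distrC (le_lt_trans qp) // gtr_pMr // invf_lt1 // ltr1n.
Qed.

(* No shell is empty; the side condition only spares us proving it. *)
Definition shells : set (set V) := [set X | X !=set0 /\ exists k, X = shell k].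

Lemma shells_partition : is_partition shells.
Proof.
split=> [X [] //|_ _ [_ [k ->]] [_ [k' ->]] [x [xk xk']]|x].
  by rewrite (shell_inj xk xk').
exists (shell (Num.truncn (`|x| ^+ n.+1))); split; last exact: shell_truncn.
by split; [exists x; exact: shell_truncn | eexists].
Qed.

Lemma shells_neighbours_le2 (p : V) e :
    (forall q, `|q - p| <= e -> `|(`|q| ^+ n.+1 - `|p| ^+ n.+1)| < 2^-1) ->
  (neighbours shells e p #<= `I_2)%card.
Proof.
move=> near_p; pose K := Num.truncn (`|p| ^+ n.+1 + 2^-1).
apply: (@card_le_trans _ _ _ ((fun i => shell (K.-1 + i)) @` `I_2)); last exact: card_image_le.
apply: subset_card_le => _ [[_ [k ->]] [q [qk qp]]].
have {}qp : `|q - p| <= e by rewrite -dmaxE.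
have /andP[Kk kK] := truncn_half_near (exprn_ge0 _ (normr_ge0 p)) (near_p q qp) qk.
rewrite -/K in Kk kK; exists (k - K.-1)%N; first by rewrite /=; lia.
by congr shell; lia.
Qed.

Lemma shells_neighbours : exists eps : V -> R,
  (forall p, 0 < eps p) /\ forall p, (neighbours shells (eps p) p #<= `I_2)%card.
Proof.
have /choice[eps heps] := exprn_norm_close.
exists eps; split => p; first by case: (heps p).
exact: shells_neighbours_le2 (heps p).2.
Qed.

End shells.

Lemma card_I2_le (T : pointedType) (A : set T) (x y : T) : A x -> A y -> x <> y ->
  (`I_2 #<= A)%card.
Proof.
move=> Ax Ay xy; apply/pcard_leP/injfunPex.
exists (fun i : nat => if i == 0%N then x else y).
- by move=> i _ /=; case: ifP.
- move=> i j; rewrite !inE /=.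
  by case: i => [|[|]] // _; case: j => [|[|]] // _ //= /esym.
Qed.

Lemma partition_open_connected (T : topologicalType) (P : set (set T)) :
  connected [set: T] -> is_partition P -> (forall X, P X -> open X) ->
  forall X, P X -> X = [set: T].
Proof.
move=> cT [Pne Pdisj Pcov] Popen X PX.
have openCX : open (~` X).
  rewrite openE => y Xy; have [Y [PY Yy]] := Pcov y.
  have : nbhs y Y by have := Popen Y PY; rewrite openE; apply.
  apply: filterS => z Yz Xz; apply: Xy.
  by rewrite -(Pdisj Y X) //; exists z.
apply: cT; first exact: Pne.
  by exists X; [exact: Popen | rewrite setTI].
by exists X; [rewrite -[X]setCK; exact: open_closedC | rewrite setTI].
Qed.

Lemma connected_rV1 (R : realType) : connected [set: 'rV[R]_1].
Proof.
have -> : [set: 'rV[R]_1] = (fun t : R => t *: const_mx 1) @` [set: R].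
  apply/seteqP; split => // x _; exists (x ord0 ord0) => //.
  by apply/rowP => i; rewrite !mxE (ord1 i) mulr1.
apply: connected_continuous_connected; last exact/continuous_subspaceT/scalel_continuous.
by apply/connected_intervalP => x y _ _ z _.
Qed.

Lemma lebesgue_outer1_setT_ge (R : realType) (M : R) :
  (M%:E <= @lebesgue_outer R 1 setT)%E.
Proof.
have [M0|M0] := leP M 0; first by rewrite (le_trans _ (lebesgue_outer_ge0 _)) // lee_fin.
apply: le_ereal_inf_tmp => _ [[a b] /= cov <-].
pose itv k : set R := `[a k ord0 ord0, b k ord0 ord0[%classic.
have cov0M : `[0, M]%classic `<=` \bigcup_k itv k.
  move=> t _; have [k _ hk] := cov (const_mx t) I.
  by exists k => //; have := hk ord0; rewrite !mxE /itv /= in_itv.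
have M_le : (M%:E <= lebesgue_measure (`[0%R, M]%classic : set R))%E.
  by rewrite lebesgue_measure_itv /= lte_fin M0 oppr0 adde0.
have := @measure_sigma_subadditive _ R _ (@lebesgue_measure R) (`[0%R, M]%classic : set R)
  itv (fun k => measurable_itv _) (measurable_itv _) cov0M.
move=> /(le_trans M_le)/le_trans; apply.
have itv_le k : (lebesgue_measure (`[a k ord0 ord0, b k ord0 ord0[%classic : set R)
    <= (box_vol (a k) (b k))%:E)%E.
  rewrite lebesgue_measure_itv /box_vol big_ord1 /=.
  by case: ifPn => _; rewrite -?EFinB lee_fin le_max lexx ?orbT.
by apply: lee_nneseries => [k _ _|k _]; [exact: measure_ge0 | exact: itv_le].
Qed.

Lemma partition_open_of_neighbours_lt2 (R : realType) d (P : set (set 'rV[R]_d))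
    (eps : 'rV[R]_d -> R) :
  is_partition P -> (forall p, 0 < eps p) ->
  (forall p, ~ (`I_2 #<= neighbours P (eps p) p)%card) ->
  forall X, P X -> open X.
Proof.
move=> [_ _ Pcov] eps0 few X PX; rewrite openE => p Xp.
apply/nbhs_ballP; exists (eps p) => [|q pq]; first exact: eps0.
have [Y [PY Yq]] := Pcov q; apply: contrapT => Xq.
apply: (few p); apply: (@card_I2_le _ _ X Y).
- split => //; exists p; split => //.
  by rewrite /cball_max /= dmaxE subrr normr0 ltW.
- split => //; exists q; split => //.
  by move: pq; rewrite /cball_max /= dmaxE -ball_normE /= distrC => /ltW.
- by move=> XY; apply: Xq; rewrite XY.
Qed.

Lemma line_partition_neighbours_ge2 (R : realType) (P : set (set 'rV[R]_1)) (M : R) :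
    is_partition P -> (forall X, P X -> (m X < M%:E)%E) ->
  forall eps : 'rV[R]_1 -> R, (forall p, 0 < eps p) ->
    exists p, (`I_2 #<= neighbours P (eps p) p)%card.
Proof.
move=> Ppart PM eps eps0; apply: contrapT => /forallNP few.
have Popen := partition_open_of_neighbours_lt2 Ppart eps0 few.
have [_ _ /(_ 0)[X [PX _]]] := Ppart.
have := PM X PX; rewrite (partition_open_connected (@connected_rV1 R) Ppart Popen PX).
by rewrite /m ltNge lebesgue_outer1_setT_ge.
Qed.

Theorem mainTheorem16 (R : realType) :
  (forall d : nat, (2 <= d)%N ->
     exists (P : set (set 'rV[R]_d)) (M : R),
       [/\ is_partition P, 0 < M,
           (forall X, P X -> lebesgue_measurable X /\ (m X < M%:E)%E)
         & exists eps : 'rV[R]_d -> R,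
             (forall p, 0 < eps p) /\
             (forall p, (neighbours P (eps p) p #<= `I_d)%card)]) /\
  (forall (P : set (set 'rV[R]_1)) (M : R),
     is_partition P -> 0 < M ->
     (forall X, P X -> lebesgue_measurable X /\ (m X < M%:E)%E) ->
     forall eps : 'rV[R]_1 -> R, (forall p, 0 < eps p) ->
       exists p, (`I_2 #<= neighbours P (eps p) p)%card).
Proof.
split; last first.
  move=> P M Ppart _ PM.
  by apply: (line_partition_neighbours_ge2 (M := M)) Ppart _ => X /PM[].
move=> [|[|n]] // _.
exists (@shells R n.+1), ((n.+2 * 2 ^ n.+3)%:R + 1); split.
- exact: shells_partition.
- by rewrite ltr_wpDl.
- move=> _ [_ [k ->]]; split; first exact: shell_measurable.
  by rewrite (le_lt_trans (lebesgue_outer_shell _ _ _)) // lte_fin ltrDl.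
- have [eps [eps0 few]] := @shells_neighbours R n.+1.
  by exists eps; split => // p; apply: card_le_trans (few p) _; rewrite card_le_II.
Qed.
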